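(* Let $M$ be a combinatorial $3$-pseudomanifold with vertex set $V=V_1\dot\cup V_2$, and suppose the slicing $S=S_{(V_1,V_2)}$ is a weakly neighborly polyhedral map. For $i=1,2$ let $n_i$ be the number of vertices of $V_i$ that lie in the boundary of $\operatorname{span}(V_i)$ (i.e. that are joined by an edge of $M$ to a vertex of the other part). Then \[ n_1n_2\,(15-n_1n_2-n_1-n_2)=12\,\chi(S). \]
   Context: A combinatorial $3$-pseudomanifold is a finite pure $3$-dimensional simplicial complex in which the link of every vertex is a combinatorial surface. $\operatorname{span}(W)$ denotes the induced subcomplex on a vertex set $W$. A function $f:M\to\mathbb{R}$ is regular simplexwise linear (rsl) if it is linear on every simplex and takes pairwise distinct values on the vertices. Given a partition $V=V_1\dot\cup V_2$ of the vertex set into nonempty sets, choose an rsl-function $f$ with $f(v)<f(w)$ for all $v\in V_1$, $w\in V_2$ and $x_0$ strictly between $\max f(V_1)$ and $\min f(V_2)$; the slicing $S_{(V_1,V_2)}$ is the polyhedral surface $f^{-1}(x_0)$, whose facets are the triangles and quadrilaterals obtained by intersecting $f^{-1}(x_0)$ with the tetrahedra of $M$ meeting both parts; its vertices are the points where $f^{-1}(x_0)$ meets edges $\langle u,w\rangle$ of $M$ with $u\in V_1$, $w\in V_2$. A polyhedral map is weakly neighborly if any two of its vertices lie in a common face. $\chi$ denotes the Euler characteristic. *)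

From mathcomp Require Import all_boot all_order all_algebra.
Set Implicit Arguments. Unset Strict Implicit. Unset Printing Implicit Defensive.
Import Order.TTheory GRing.Theory Num.Theory.

Section Defs.
Variable T : finType.

Definition surf_vertices (K : {set {set T}}) : {set T} := \bigcup_(t in K) t.

Definition link_adj (K : {set {set T}}) (x : T) : rel T :=
  fun a b => [&& x != a, x != b, a != b & [set x; a; b] \in K].

Definition link_vertex (K : {set {set T}}) (x a : T) : bool :=
  (a != x) && [exists t in K, (x \in t) && (a \in t)].

Definition skel_adj (K : {set {set T}}) : rel T :=
  fun a b => (a != b) && [exists t in K, (a \in t) && (b \in t)].

Definition comb_surface (K : {set {set T}}) : Prop :=
  [/\ K != set0,
      (forall t, t \in K -> #|t| = 3),
      (forall (e t : {set T}), t \in K -> e \subset t -> #|e| = 2 ->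
          #|[set t' in K | e \subset t']| = 2),
      (forall x a b, x \in surf_vertices K -> link_vertex K x a ->
          link_vertex K x b -> connect (link_adj K x) a b)
    & (forall a b, a \in surf_vertices K -> b \in surf_vertices K ->
          connect (skel_adj K) a b)].

Definition vertices (M : {set {set T}}) : {set T} := \bigcup_(F in M) F.

Definition is_face (M : {set {set T}}) (s : {set T}) : bool :=
  (s != set0) && [exists F in M, s \subset F].
Definition is_edge (M : {set {set T}}) (e : {set T}) : bool :=
  (#|e| == 2) && is_face M e.
Definition is_triangle (M : {set {set T}}) (t : {set T}) : bool :=
  (#|t| == 3) && is_face M t.

Definition vlink (M : {set {set T}}) (v : T) : {set {set T}} :=
  [set F :\ v | F in [set F in M | v \in F]].

Definition comb_3_pseudomanifold (M : {set {set T}}) : Prop :=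
  [/\ M != set0,
      (forall F, F \in M -> #|F| = 4)
    & (forall v, v \in vertices M -> comb_surface (vlink M v))].

(* ---------- the slicing S_(V1, V2), V2 = complement of V1 ---------- *)
Definition crosses (V1 : {set T}) (s : {set T}) : bool :=
  (s :&: V1 != set0) && (s :\: V1 != set0).

(* vertices of the slicing: edges <u,w> of M with u in V1, w in V2 *)
Definition slice_vertices (M : {set {set T}}) (V1 : {set T}) : {set {set T}} :=
  [set e | is_edge M e && crosses V1 e].
(* edges of the slicing: triangles of M meeting both parts *)
Definition slice_edges (M : {set {set T}}) (V1 : {set T}) : {set {set T}} :=
  [set t | is_triangle M t && crosses V1 t].
(* faces (triangles/quadrilaterals) of the slicing: tetrahedra meeting both parts *)
Definition slice_faces (M : {set {set T}}) (V1 : {set T}) : {set {set T}} :=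
  [set F in M | crosses V1 F].

Definition slice_cell_vertices (M : {set {set T}}) (V1 : {set T}) (s : {set T})
  : {set {set T}} := [set e in slice_vertices M V1 | e \subset s].

Definition slice_euler (M : {set {set T}}) (V1 : {set T}) : int :=
  (#|slice_vertices M V1|%:Z - #|slice_edges M V1|%:Z + #|slice_faces M V1|%:Z)%R.

Definition slice_polyhedral_map (M : {set {set T}}) (V1 : {set T}) : Prop :=
  forall F G, F \in slice_faces M V1 -> G \in slice_faces M V1 -> F != G ->
    let I := slice_cell_vertices M V1 F :&: slice_cell_vertices M V1 G in
    #|I| <= 1 \/
    exists2 t, t \in slice_edges M V1 &
      [/\ t \subset F, t \subset G & I = slice_cell_vertices M V1 t].

Definition slice_weakly_neighborly (M : {set {set T}}) (V1 : {set T}) : Prop :=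
  forall e1 e2 : {set T}, e1 \in slice_vertices M V1 -> e2 \in slice_vertices M V1 ->
    exists2 F, F \in slice_faces M V1 & (e1 \subset F) && (e2 \subset F).

(* vertices of A joined by an edge of M to a vertex outside A
   (= vertices of A in the boundary of span(A)) *)
Definition boundary_count (M : {set {set T}}) (A : {set T}) : nat :=
  #|[set v in A | [exists w in ~: A, is_edge M [set v; w]]]|.

End Defs.

(* Weak neighborliness forces every boundary vertex of V1 to be joined to every
   boundary vertex of V2, and any two such edges to lie in a common tetrahedron.
   Hence, with n1, n2 the numbers of boundary vertices, the slicing has
   f0 = n1 n2 vertices; each of them, an edge ab of M, lies in the n1 + n2 - 2
   triangles abv with v a boundary vertex, and each crossing triangle carries two
   vertices of the slicing, so 2 f1 = f0 (n1 + n2 - 2).  Each crossing triangle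
   lies in exactly two tetrahedra (the link of a vertex is a surface), and a
   crossing tetrahedron contains 3 crossing triangles, or 4 when it is split 2+2;
   the 2+2 tetrahedra are exactly the unions of two boundary vertices on each
   side, so 2 f1 = 3 f2 + C(n1,2) C(n2,2).  Eliminating f1 and f2 from
   f0 - f1 + f2 gives the formula. *)

From mathcomp Require Import all_boot all_order all_algebra zify.
Import Order.TTheory GRing.Theory Num.Theory.
Set Implicit Arguments. Unset Strict Implicit. Unset Printing Implicit Defensive.

Lemma double_counting (I J : finType) (X : {set I}) (Y : {set J}) (R : I -> J -> bool) :
  \sum_(x in X) #|[set y in Y | R x y]| = \sum_(y in Y) #|[set x in X | R x y]|.
Proof.
under eq_bigr do rewrite -sum1dep_card.
under [RHS]eq_bigr do rewrite -sum1dep_card.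
rewrite (exchange_big_dep (fun y => y \in Y)) => [|x y _ /andP[]//].
by apply: eq_bigr => y yY; apply: eq_bigl => x; rewrite yY.
Qed.

Lemma card_one_point_extensions (T : finType) (e : {set T}) (P : pred {set T}) :
  #|[set t : {set T} | [&& e \subset t, #|t| == #|e|.+1 & P t]]| =
  #|[set v | (v \notin e) && P (v |: e)]|.
Proof.
set D := [set v | _]; rewrite -(card_in_imset (f := fun v => v |: e) (D := D)); last first.
  move=> v v'; rewrite !inE => /andP[ve _] /andP[v'e _] vv'.
  by have := setU11 v e; rewrite vv' in_setU1 (negbTE ve) orbF => /eqP.
apply: eq_card => t; rewrite inE; apply/idP/imsetP.
- case/and3P=> et /eqP t_card Pt.
  have /cards1P[v tDe] : #|t :\: e| == 1 by rewrite cardsD (setIidPr et) t_card subSnn.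
  have vt : v \in t :\: e by rewrite tDe set11.
  have tE : t = v |: e by rewrite -(setID t e) (setIidPr et) tDe setUC.
  by exists v => //; move: vt; rewrite !inE -tE Pt andbT => /andP[].
- case=> v; rewrite inE => /andP[ve Pv] ->.
  by rewrite subsetUr Pv cardsU1 ve add1n eqxx.
Qed.

Lemma card2_set2 (T : finType) (e : {set T}) a b :
  #|e| = 2 -> a \in e -> b \in e -> a != b -> e = [set a; b].
Proof.
move=> e_card ae be ab; apply/eqP; rewrite eq_sym eqEcard subUset !sub1set ae be.
by rewrite cards2 ab e_card.
Qed.

Lemma setU_parts (T : finType) (X P Q : {set T}) : P \subset X -> Q \subset ~: X ->
  (P :|: Q) :&: X = P /\ (P :|: Q) :\: X = Q.
Proof.
move=> PX QX; have QX' : [disjoint Q & X] by rewrite disjoints_subset.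
split; first by rewrite setIUl (setIidPl PX) (disjoint_setI0 QX') setU0.
have /eqP PX0 : P :\: X == set0 by rewrite setD_eq0.
by rewrite setDUl (setDidPl QX') PX0 set0U.
Qed.

Section Crossing.
Variables (T : finType) (V1 : {set T}).

Definition crossing_subsets (m : nat) (s : {set T}) : {set {set T}} :=
  [set e : {set T} | [&& e \subset s, #|e| == m & crosses V1 e]].

Lemma crossesP (s : {set T}) :
  reflect (exists a b, [/\ a \in s, a \in V1, b \in s & b \notin V1]) (crosses V1 s).
Proof.
apply: (iffP andP) => [[/set0Pn[a] + /set0Pn[b]]|[a [b [sa aV sb bV]]]].
  by rewrite !inE => /andP[? ?] /andP[? ?]; exists a, b.
by split; apply/set0Pn; [exists a | exists b]; rewrite !inE ?sa ?aV ?sb ?bV.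
Qed.

Lemma crossesS (s s' : {set T}) : s \subset s' -> crosses V1 s -> crosses V1 s'.
Proof.
move=> ss' /crossesP[a [b [? ? ? ?]]]; apply/crossesP; exists a, b.
by split => //; apply: (subsetP ss').
Qed.

Lemma card_crossing_subsets m (s : {set T}) : 0 < m ->
  #|crossing_subsets m s| = 'C(#|s|, m) - 'C(#|s :&: V1|, m) - 'C(#|s :\: V1|, m).
Proof.
move=> m_gt0; rewrite -!cards_draws.
set D := fun X : {set T} => [set e : {set T} | e \subset X & #|e| == m].
set X := [set e : {set T} | crosses V1 e].
have DI Y Z : D Y :&: D Z = D (Y :&: Z).
  by apply/setP => e; rewrite /D !inE subsetI; case: (e \subset Y); case: (e \subset Z); case: (_ == m).
have crossing_eq : D s :&: X = crossing_subsets m s.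
  by apply/setP => e; rewrite /D /X !inE andbA.
have noncrossing_eq : D s :\: X = D (s :&: V1) :|: D (s :\: V1).
  apply/setP => e; rewrite /D /X !inE subsetI subsetD negb_and !negbK setI_eq0 setD_eq0.
  by case: (e \subset s); case: (e \subset V1); case: [disjoint e & V1]; case: (_ == m).
have split0 : (s :&: V1) :&: (s :\: V1) = set0.
  by apply/setP => x; rewrite !inE; case: (x \in V1); rewrite ?andbF.
have := cardsID X (D s); rewrite crossing_eq noncrossing_eq cardsU DI split0.
rewrite (cards_draws set0) cards0 bin0n eqn0Ngt m_gt0 subn0.
by rewrite /D => <-; rewrite -subnDA addnK.
Qed.

Lemma card_crossing_pairs (s : {set T}) : #|crossing_subsets 2 s| = #|s :&: V1| * #|s :\: V1|.
Proof.
rewrite card_crossing_subsets // -(cardsID V1 s) -binomial.Vandermonde !big_ord_recr big_ord0 /=.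
rewrite !bin0 !bin1 subn0; lia.
Qed.

End Crossing.

Definition boundary (T : finType) (M : {set {set T}}) (X : {set T}) : {set T} :=
  [set v in X | [exists w in ~: X, is_edge M [set v; w]]].

Section Slicing.
Variables (T : finType) (M : {set {set T}}) (V1 : {set T}).

Lemma is_face_facet F (s : {set T}) : F \in M -> s \subset F -> is_face M s = (s != set0).
Proof.
move=> FM sF; rewrite /is_face; case: (s != set0) => //=.
by apply/existsP; exists F; rewrite FM.
Qed.

Lemma is_edge_facet F a b : F \in M -> a \in F -> b \in F -> a != b -> is_edge M [set a; b].
Proof.
move=> FM aF bF ab; rewrite /is_edge cards2 ab (is_face_facet FM).
  by apply/set0Pn; exists a; rewrite set21.
by rewrite subUset !sub1set aF bF.
Qed.

Lemma crossing_faces_in_facet m F (s : {set T}) : 0 < m -> F \in M -> s \subset F ->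
  [set e : {set T} | [&& #|e| == m, is_face M e, crosses V1 e & e \subset s]] =
  crossing_subsets V1 m s.
Proof.
move=> m_gt0 FM sF; apply/setP => e; rewrite !inE.
case es: (e \subset s); rewrite ?andbF //=.
rewrite (is_face_facet FM (subset_trans es sF)) andbT.
case: eqP => //= e_card; by rewrite -card_gt0 e_card m_gt0.
Qed.

Lemma slice_vertices_in_facet F (s : {set T}) : F \in M -> s \subset F ->
  [set e in slice_vertices M V1 | e \subset s] = crossing_subsets V1 2 s.
Proof.
move=> FM sF; rewrite -(crossing_faces_in_facet _ FM sF) //.
by apply/setP => e; rewrite !inE /is_edge -!andbA.
Qed.

Lemma slice_edges_in_facet F (s : {set T}) : F \in M -> s \subset F ->
  [set t in slice_edges M V1 | t \subset s] = crossing_subsets V1 3 s.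
Proof.
move=> FM sF; rewrite -(crossing_faces_in_facet _ FM sF) //.
by apply/setP => t; rewrite !inE /is_triangle -!andbA.
Qed.

Lemma mem_boundary (X : {set T}) a b :
  a \in X -> b \notin X -> is_edge M [set a; b] -> a \in boundary M X.
Proof. by move=> aX bX ab; rewrite inE aX; apply/exists_inP; exists b; rewrite ?inE. Qed.

Lemma boundary_sub (X : {set T}) : boundary M X \subset X.
Proof. by apply/subsetP => v; rewrite inE => /andP[]. Qed.

Lemma mem_slice_vertices a b : a \in V1 -> b \notin V1 -> is_edge M [set a; b] ->
  [set a; b] \in slice_vertices M V1.
Proof. by move=> aV bV ab; rewrite inE ab; apply/crossesP; exists a, b; rewrite set21 set22. Qed.

Local Notation A := (boundary M V1).
Local Notation B := (boundary M (~: V1)).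

Lemma boundary_parts : (A :|: B) :&: V1 = A /\ (A :|: B) :\: V1 = B.
Proof. by apply: setU_parts; apply: boundary_sub. Qed.

Lemma boundaryV1 a : a \in A -> a \in V1.
Proof. exact: (subsetP (boundary_sub V1)). Qed.

Lemma boundaryNV1 b : b \in B -> b \notin V1.
Proof. by move/(subsetP (boundary_sub _)); rewrite inE. Qed.

Lemma card_boundaryU : #|A :|: B| = #|A| + #|B|.
Proof. by rewrite -(cardsID V1 (A :|: B)); case: boundary_parts => -> ->. Qed.

Lemma crossing_sub_boundary F (s : {set T}) : F \in M -> s \subset F -> crosses V1 s ->
  s \subset A :|: B.
Proof.
move=> FM sF /crossesP[a [b [sa aV sb bV]]]; apply/subsetP => x sx.
have xF := subsetP sF x sx; rewrite in_setU.
case/boolP: (x \in V1) => xV.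
  apply/orP; left; apply: (mem_boundary xV bV); apply: (is_edge_facet FM xF (subsetP sF b sb)).
  by apply: contraNneq bV => <-.
apply/orP; right; apply: (@mem_boundary _ x a); rewrite ?inE ?negbK //.
by apply: (is_edge_facet FM xF (subsetP sF a sa)); apply: contraNneq xV => ->.
Qed.

Lemma crossing_pair_boundary (e : {set T}) : e \subset A :|: B -> #|e| = 2 -> crosses V1 e ->
  exists a b, [/\ a \in A, b \in B & e = [set a; b]].
Proof.
move=> eAB e_card /crossesP[a [b [ae aV be bV]]]; exists a, b.
have [AB_V1 AB_V2] := boundary_parts.
split; last by apply: card2_set2 => //; apply: contraNneq bV => <-.
  by rewrite -AB_V1 inE (subsetP eAB a ae).
by rewrite -AB_V2 inE (subsetP eAB b be) bV.
Qed.

Lemma card_slice_vertices_in_slice_edge t : t \in slice_edges M V1 ->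
  #|[set e in slice_vertices M V1 | e \subset t]| = 2.
Proof.
rewrite !inE /is_triangle => /andP[/andP[/eqP t_card /andP[_ /exists_inP[F FM tF]]]].
rewrite (slice_vertices_in_facet FM tF) card_crossing_pairs => /andP[].
rewrite -!card_gt0; have := cardsID V1 t; rewrite t_card.
move: #|_ :&: _| #|_ :\: _| => k j; nia.
Qed.

Hypothesis facet_card : forall F, F \in M -> #|F| = 4.

Lemma card_slice_edges_in_slice_face F : F \in slice_faces M V1 ->
  #|[set t in slice_edges M V1 | t \subset F]| = 3 + (#|F :&: V1| == 2).
Proof.
rewrite inE => /andP[FM /andP[]]; rewrite -!card_gt0.
rewrite (slice_edges_in_facet FM (subxx F)) card_crossing_subsets // (facet_card FM).
have := cardsID V1 F; rewrite (facet_card FM).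
move: #|_ :&: _| #|_ :\: _| => k j kj k_gt0 j_gt0.
have -> : j = 4 - k by lia.
by have [-> | [-> | ->]] : k = 1 \/ k = 2 \/ k = 3 by lia.
Qed.

Hypothesis link_surface : forall v, v \in vertices M -> comb_surface (vlink M v).

Lemma card_slice_faces_through t : t \in slice_edges M V1 ->
  #|[set F in slice_faces M V1 | t \subset F]| = 2.
Proof.
rewrite !inE /is_triangle => /andP[/andP[/eqP t_card /andP[_ /exists_inP[F0 F0M tF0]]] t_cross].
have -> : [set F in slice_faces M V1 | t \subset F] = [set F in M | t \subset F].
  apply/setP => F; rewrite !inE; case tF: (t \subset F); rewrite ?andbF ?andbT //.
  by rewrite (crossesS tF t_cross) andbT.
(* Removing a vertex v of t identifies the facets through t with the triangles
   of the link of v through the edge t :\ v. *)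
have /set0Pn[v vt] : t != set0 by rewrite -card_gt0 t_card.
have [_ _ link_edge_in_two _ _] : comb_surface (vlink M v).
  by apply: link_surface; apply/bigcupP; exists F0 => //; apply: (subsetP tF0).
have tv_card : #|t :\ v| = 2 by move: t_card; rewrite (cardsD1 v) vt => -[].
have F0v : F0 :\ v \in vlink M v.
  by apply/imsetP; exists F0; rewrite // inE F0M (subsetP tF0).
rewrite -(link_edge_in_two _ _ F0v (setSD _ tF0) tv_card).
have -> : [set t' in vlink M v | t :\ v \subset t'] =
    (fun F => F :\ v) @: [set F in M | t \subset F].
  apply/setP => t'; rewrite inE; apply/andP/imsetP.
  - case=> /imsetP[G]; rewrite inE => /andP[GM vG] -> tG.
    by exists G; rewrite // inE GM -(setD1K vt) -(setD1K vG) setUS.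
  - case=> G; rewrite inE => /andP[GM tG] ->; split; last exact: setSD.
    by apply/imsetP; exists G; rewrite // inE GM (subsetP tG).
rewrite card_in_imset // => F G; rewrite !inE => /andP[_ tF] /andP[_ tG] FG.
by rewrite -(setD1K (subsetP tF v vt)) FG setD1K // (subsetP tG).
Qed.

Hypothesis weakly_neighborly : slice_weakly_neighborly M V1.

Lemma boundary_edge a b : a \in A -> b \in B -> is_edge M [set a; b].
Proof.
rewrite !inE setCK => /andP[aV /exists_inP[b' b'V ab']] /andP[bV /exists_inP[a' a'V ba']].
rewrite inE in b'V; rewrite setUC in ba'.
have [F] := weakly_neighborly (mem_slice_vertices aV b'V ab') (mem_slice_vertices a'V bV ba').
rewrite inE => /andP[FM _] /andP[]; rewrite !subUset !sub1set => /andP[aF _] /andP[_ bF].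
by apply: (is_edge_facet FM aF bF); apply: contraNneq bV => <-.
Qed.

Lemma boundary_common_facet a a' b b' : a \in A -> a' \in A -> b \in B -> b' \in B ->
  exists2 F, F \in M & [&& a \in F, a' \in F, b \in F & b' \in F].
Proof.
move=> aA a'A bB b'B.
have slice_vertex x y : x \in A -> y \in B -> [set x; y] \in slice_vertices M V1.
  by move=> xA yB; apply: mem_slice_vertices (boundaryV1 xA) (boundaryNV1 yB) (boundary_edge xA yB).
have [F] := weakly_neighborly (slice_vertex a b aA bB) (slice_vertex a' b' a'A b'B).
rewrite inE => /andP[FM _] /andP[]; rewrite !subUset !sub1set => /andP[aF bF] /andP[a'F b'F].
by exists F; rewrite ?aF ?a'F ?bF ?b'F.
Qed.

Lemma slice_vertices_boundary : slice_vertices M V1 = crossing_subsets V1 2 (A :|: B).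
Proof.
apply/setP => e; apply/idP/idP.
  rewrite !inE => /andP[/andP[e_card /andP[_ /exists_inP[F FM eF]]] e_cross].
  by rewrite e_card e_cross (crossing_sub_boundary FM eF e_cross).
rewrite inE => /and3P[eAB /eqP e_card e_cross].
have [a [b [aA bB ->]]] := crossing_pair_boundary eAB e_card e_cross.
exact: mem_slice_vertices (boundaryV1 aA) (boundaryNV1 bB) (boundary_edge aA bB).
Qed.

Lemma card_slice_vertices : #|slice_vertices M V1| = #|A| * #|B|.
Proof. by rewrite slice_vertices_boundary card_crossing_pairs; case: boundary_parts => -> ->. Qed.

Lemma card_slice_edges_through e : e \in slice_vertices M V1 ->
  #|[set t in slice_edges M V1 | e \subset t]| + 2 = #|A| + #|B|.
Proof.
rewrite slice_vertices_boundary inE => /and3P[eAB /eqP e_card e_cross].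
have -> : [set t in slice_edges M V1 | e \subset t] =
    [set t : {set T} | [&& e \subset t, #|t| == #|e|.+1 & is_face M t]].
  apply/setP => t; rewrite !inE /is_triangle e_card.
  case et: (e \subset t); rewrite ?andbF //=.
  by rewrite (crossesS et e_cross) !andbT.
rewrite card_one_point_extensions.
have -> : [set v | (v \notin e) && is_face M (v |: e)] = (A :|: B) :\: e.
  apply/setP => v; rewrite in_setD in_set; case: (v \in e) => //=; apply/idP/idP.
    case/andP=> _ /exists_inP[F FM vF].
    apply: (subsetP (crossing_sub_boundary FM vF _)); last exact: setU11.
    exact: crossesS (subsetUr _ _) e_cross.
  move=> vAB; have [a [b [aA bB e_ab]]] := crossing_pair_boundary eAB e_card e_cross.
  have [F FM v_ab_F] : exists2 F, F \in M & [&& v \in F, a \in F & b \in F].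
    case/setUP: vAB => [vA|vB].
      by have [F FM /and4P[? ? ? _]] := boundary_common_facet vA aA bB bB; exists F => //; apply/and3P.
    by have [F FM /and4P[? _ ? ?]] := boundary_common_facet aA aA vB bB; exists F => //; apply/and3P.
  rewrite (is_face_facet FM); first by apply/set0Pn; exists v; rewrite setU11.
  by rewrite e_ab !subUset !sub1set.
by rewrite -card_boundaryU -e_card -(cardsID e (A :|: B)) (setIidPr eAB) addnC.
Qed.

Lemma boundary_pairs_facet (P Q : {set T}) : P \subset A -> Q \subset B -> #|P| = 2 -> #|Q| = 2 ->
  P :|: Q \in M.
Proof.
move=> PA QB P_card Q_card.
have [PQ_V1 PQ_V2] : (P :|: Q) :&: V1 = P /\ (P :|: Q) :\: V1 = Q.
  by apply: setU_parts; [apply: subset_trans PA _ | apply: subset_trans QB _]; apply: boundary_sub.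
have PQ_card : #|P :|: Q| = 4 by rewrite -(cardsID V1) PQ_V1 PQ_V2 P_card Q_card.
move: P_card Q_card => /eqP/cards2P[a [a' [_ P_aa']]] /eqP/cards2P[b [b' [_ Q_bb']]].
have [F FM /and4P[aF a'F bF b'F]] : exists2 F, F \in M & [&& a \in F, a' \in F, b \in F & b' \in F].
  by apply: boundary_common_facet;
    [apply: (subsetP PA) | apply: (subsetP PA) | apply: (subsetP QB) | apply: (subsetP QB)];
    rewrite ?P_aa' ?Q_bb' ?set21 ?set22.
suff -> : P :|: Q = F by [].
apply/eqP; rewrite eqEcard (facet_card FM) PQ_card leqnn andbT.
by rewrite P_aa' Q_bb' !subUset !sub1set aF a'F bF b'F.
Qed.

Lemma card_balanced_slice_faces :
  #|[set F in slice_faces M V1 | #|F :&: V1| == 2]| = 'C(#|A|, 2) * 'C(#|B|, 2).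
Proof.
rewrite -!cards_draws -cardsX; set PQs := setX _ _.
have PQ_parts (P Q : {set T}) : (P, Q) \in PQs -> (P :|: Q) :&: V1 = P /\ (P :|: Q) :\: V1 = Q.
  case/setXP; rewrite !inE => /andP[PA _] /andP[QB _].
  by apply: setU_parts; [apply: subset_trans PA _ | apply: subset_trans QB _]; apply: boundary_sub.
have -> : [set F in slice_faces M V1 | #|F :&: V1| == 2] = [set PQ.1 :|: PQ.2 | PQ in PQs].
  apply/setP => F; apply/idP/imsetP.
    rewrite !inE => /andP[/andP[FM F_cross] /eqP FV1_card].
    exists (F :&: V1, F :\: V1); last by rewrite setID.
    have FAB := crossing_sub_boundary FM (subxx F) F_cross.
    have [AB_V1 AB_V2] := boundary_parts.
    have FV2_card : #|F :\: V1| = 2 by have := cardsID V1 F; rewrite (facet_card FM) FV1_card => -[].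
    have := setSI V1 FAB; have := setSD V1 FAB; rewrite AB_V1 AB_V2 => FV2B FV1A.
    by rewrite !inE /= FV1_card FV2_card FV1A FV2B.
  case=> [[P Q]] PQ_in ->; have [PQ_V1 PQ_V2] := PQ_parts _ _ PQ_in.
  move: PQ_in => /setXP[]; rewrite !inE => /andP[PA /eqP P_card] /andP[QB /eqP Q_card] /=.
  by rewrite boundary_pairs_facet //= /crosses PQ_V1 PQ_V2 -!card_gt0 P_card Q_card.
rewrite card_in_imset // => -[P Q] [P' Q'] /PQ_parts[PQ_V1 PQ_V2] /PQ_parts[PQ_V1' PQ_V2'] /= PQ_eq.
by congr (_, _); [rewrite -PQ_V1 PQ_eq PQ_V1' | rewrite -PQ_V2 PQ_eq PQ_V2'].
Qed.

Lemma slice_edge_relation :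
  2 * #|slice_edges M V1| + 2 * #|slice_vertices M V1| =
  #|slice_vertices M V1| * (#|A| + #|B|).
Proof.
have sum_vertices : \sum_(t in slice_edges M V1) #|[set e in slice_vertices M V1 | e \subset t]| =
    \sum_(t in slice_edges M V1) 2.
  by apply: eq_bigr => t /card_slice_vertices_in_slice_edge.
have sum_edges : \sum_(e in slice_vertices M V1) (#|[set t in slice_edges M V1 | e \subset t]| + 2) =
    \sum_(e in slice_vertices M V1) (#|A| + #|B|).
  by apply: eq_bigr => e /card_slice_edges_through.
rewrite -sum_nat_const -sum_edges big_split /= sum_nat_const.
rewrite (double_counting _ _ (fun e t : {set T} => e \subset t)) sum_vertices sum_nat_const.
by rewrite !(mulnC 2).
Qed.

Lemma slice_face_relation :
  2 * #|slice_edges M V1| = 3 * #|slice_faces M V1| + 'C(#|A|, 2) * 'C(#|B|, 2).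
Proof.
have sum_faces : \sum_(t in slice_edges M V1) #|[set F in slice_faces M V1 | t \subset F]| =
    \sum_(t in slice_edges M V1) 2.
  by apply: eq_bigr => t /card_slice_faces_through.
have sum_edges : \sum_(F in slice_faces M V1) #|[set t in slice_edges M V1 | t \subset F]| =
    \sum_(F in slice_faces M V1) (3 + (#|F :&: V1| == 2)).
  by apply: eq_bigr => F /card_slice_edges_in_slice_face.
have := double_counting (slice_edges M V1) (slice_faces M V1) (fun t F => t \subset F).
rewrite sum_faces sum_edges big_split !sum_nat_const /= mulnC => ->.
rewrite mulnC -card_balanced_slice_faces.
by rewrite -sum1dep_card big_mkcondr /=; congr (_ + _); apply: eq_bigr => F _; case: (_ == 2).
Qed.

End Slicing.

Local Open Scope ring_scope.

Lemma euler_char_identity (n1 n2 f0 f1 f2 : nat) :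
  f0 = (n1 * n2)%N ->
  (2 * f1 + 2 * f0 = f0 * (n1 + n2))%N ->
  (2 * f1 = 3 * f2 + 'C(n1, 2) * 'C(n2, 2))%N ->
  n1%:Z * n2%:Z * (15 - n1%:Z * n2%:Z - n1%:Z - n2%:Z) = 12 * (f0%:Z - f1%:Z + f2%:Z).
Proof.
have bin2_diag n : (2 * 'C(n, 2) + n = n * n)%N.
  by rewrite -mul_bin_diag bin1; case: n => //= n; rewrite -mulnSr.
(* 12 (f0 - f1 + f2) = 12 f0 - 2 (2 f1) - (2 C(n1,2)) (2 C(n2,2)) *)
move=> -> f1_eq f2_eq; have := bin2_diag n1; have := bin2_diag n2.
nia.
Qed.

Theorem lemma5p4 (T : finType) (M : {set {set T}}) (V1 : {set T}) :
  comb_3_pseudomanifold M ->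
  vertices M = [set: T] ->
  V1 != set0 -> ~: V1 != set0 ->
  slice_polyhedral_map M V1 ->
  slice_weakly_neighborly M V1 ->
  let n1 := (boundary_count M V1)%:Z in
  let n2 := (boundary_count M (~: V1))%:Z in
  n1 * n2 * (15 - n1 * n2 - n1 - n2) = 12 * slice_euler M V1.
Proof.
move=> [_ facet_card link_surface] _ _ _ _ weakly_neighborly n1 n2.
apply: euler_char_identity.
- exact: card_slice_vertices weakly_neighborly.
- exact: slice_edge_relation weakly_neighborly.
- exact: slice_face_relation facet_card link_surface weakly_neighborly.
Qed.
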